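(* Let $X$ be a Banach space, $C\subset X$ a nonempty generalized polyhedral convex set, and $f:X\to\mathbb R$ continuously Fréchet differentiable on $X$. Let $\bar x$ be a local minimum of $\min\{f(x)\mid x\in C\}$, and suppose there exist $\ell>0$ and a neighborhood $U$ of $\bar x$ such that $\|\nabla f(x)-\nabla f(\bar x)\|\le\ell\|x-\bar x\|$ for all $x\in U$. Then $\langle\nabla f(\bar x),v\rangle\ge0$ for all $v\in T_C(\bar x)$, and for each $v\in X$ such that $v\in T_C(\bar x)$, $-v\in T_C(\bar x)$ and $\langle\nabla f(\bar x),v\rangle=0$, one has $$\langle\nabla f(\bar x),w\rangle\ge0\ \text{ for all } w\in T^2_C(\bar x,v)\quad\text{and}\quad \langle z,v\rangle\ge 0\ \text{ for all } z\in\widehat\partial^2 f(\bar x)(v),$$ where $v$ is regarded as an element of $X^{**}$ via the canonical embedding.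
   Context: Contingent cone: for $C\subset X$ and $\bar x\in C$, $T_C(\bar x)$ is the set of $v\in X$ for which there exist $\tau_k>0$, $\tau_k\to0$, and $x_k\in C$ with $v=\lim_k \tau_k^{-1}(x_k-\bar x)$. Second-order tangent set: for $v\in T_C(\bar x)$, $T^2_C(\bar x,v)$ is the set of $w\in X$ for which there exist $\tau_k>0$, $\tau_k\to 0$, and $x^k\in C$ with $w=\lim_k \frac{x^k-\bar x-\tau_k v}{\tau_k^2/2}$. A set $D\subset X$ is generalized polyhedral convex if $D=\{x\in L\mid \langle x_i^*,x\rangle\le\alpha_i,\ i=1,\dots,p\}$ for some $x_i^*\in X^*$, $\alpha_i\in\mathbb R$ and a closed affine subspace $L\subset X$. Fréchet normal cone: for $\Omega\subset Z$ (Banach space) and $z\in\Omega$, $\widehat N_\Omega(z)=\{z^*\in Z^*\mid \limsup_{u\to z,\,u\in\Omega}\frac{\langle z^*,u-z\rangle}{\|u-z\|}\le0\}$. For $f$ Fréchet differentiable, the Fréchet second-order subdifferential at $\bar x$ is the map $\widehat\partial^2 f(\bar x):X^{**}\rightrightarrows X^*$, $\widehat\partial^2 f(\bar x)(u)=\{z\in X^*\mid (z,-u)\in\widehat N_{\mathrm{gph}\,\nabla f}((\bar x,\nabla f(\bar x)))\}$, where $\mathrm{gph}\,\nabla f=\{(x,\nabla f(x))\mid x\in X\}\subset X\times X^*$ with norm $\|(x,x^* )\|=\|x\|+\|x^*\|$ and dual $X^*\times X^{**}$; in the claim it is restricted to $u\in X\subset X^{**}$, where $\langle u,x^*\rangle:=\langle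 x^*,u\rangle$. *)

From HB Require Import structures.
From mathcomp Require Import all_boot all_order all_algebra.
From mathcomp Require Import all_classical all_reals all_analysis.
Set Implicit Arguments. Unset Strict Implicit. Unset Printing Implicit Defensive.
Import Order.TTheory GRing.Theory Num.Theory.
Import numFieldNormedType.Exports.
Local Open Scope classical_set_scope.
Local Open Scope ring_scope.

Section Defs.
Variables (R : realType) (X : normedModType R).

Definition is_dual (g : X -> R) : Prop :=
  (forall (a : R) (x y : X), g (a *: x + y) = a * g x + g y) /\ continuous g.

Definition dnorm (g : X -> R) : R :=
  sup [set `|g x| | x in [set x : X | `|x| <= 1]].

Definition C1 (f : X -> R) : Prop :=
  (forall x, differentiable f x) /\
  (forall x (e : R), 0 < e -> exists2 d : R, 0 < d &
     forall y, `|y - x| < d -> dnorm (fun h => 'd f y h - 'd f x h) < e).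

Definition closed_affine (L : set X) : Prop :=
  exists (a : X) (M : set X),
    [/\ M 0, (forall (r : R) x y, M x -> M y -> M (r *: x + y)), closed M &
        L = [set a + m | m in M]].

Definition gen_polyhedral (C : set X) : Prop :=
  exists (p : nat) (xs : nat -> X -> R) (alpha : nat -> R) (L : set X),
    [/\ closed_affine L, (forall i, (i < p)%N -> is_dual (xs i)) &
        C = [set x | L x /\ forall i, (i < p)%N -> xs i x <= alpha i]].

Definition tangent_cone (C : set X) (xbar : X) : set X :=
  [set v | exists (tau : nat -> R) (xk : nat -> X),
     [/\ forall k, 0 < tau k, tau @ \oo --> (0 : R), forall k, C (xk k) &
         (fun k => (tau k)^-1 *: (xk k - xbar)) @ \oo --> v]].

Definition tangent_set2 (C : set X) (xbar v : X) : set X :=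
  [set w | exists (tau : nat -> R) (xk : nat -> X),
     [/\ forall k, 0 < tau k, tau @ \oo --> (0 : R), forall k, C (xk k) &
         (fun k => ((tau k ^+ 2) / 2)^-1 *: (xk k - xbar - tau k *: v))
           @ \oo --> w]].

(** Frechet second-order subdifferential restricted to u in X (embedded in
    X^{**}): z in hat-d^2 f(xbar)(u) iff z in X^{*} and (z,-u) is a Frechet normal
    to gph (grad f) at (xbar, grad f xbar), where X x X^{*} carries the norm
    ||(x,x_) || = ||x|| + ||x_||_{dual} and the pairing of (z,-u) with (x,x_) is
    z x - x_(u).  The limsup over points of the graph (x, grad f x) distinct
    from (xbar, grad f xbar) (i.e. x <> xbar) is unfolded. *)
Definition frechet_sod (f : X -> R) (xbar u : X) : set (X -> R) :=
  [set z | is_dual z /\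
     forall e : R, 0 < e -> exists2 d : R, 0 < d &
       forall x : X,
         let nd := `|x - xbar| + dnorm (fun h => 'd f x h - 'd f xbar h) in
         0 < nd -> nd < d ->
         (z (x - xbar) - ('d f x u - 'd f xbar u)) / nd <= e].

End Defs.

From HB Require Import structures.
From mathcomp Require Import all_boot all_order all_algebra.
From mathcomp Require Import all_classical all_reals all_analysis.
From mathcomp Require Import lra.
Import Order.TTheory GRing.Theory Num.Theory.
Import numFieldNormedType.Exports.
Local Open Scope classical_set_scope.
Local Open Scope ring_scope.
Set Implicit Arguments. Unset Strict Implicit.

(** Writing C = { x | x - xbar in M, xs_i x <= alpha_i (i < p) } with M a
    closed linear subspace and xs_i continuous linear functionals, the key
    object is the cone of feasible directions at xbar,
        F = { u in M | xs_i u <= 0 for every active i },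
    which is a closed convex cone containing x - xbar for every x in C.
    Hence it contains the contingent cone and, when -v is in F, also the
    second-order tangent set T^2_C(xbar, v).  Conversely, for u in F the
    whole segment xbar + t u, 0 < t small, lies in C (polyhedrality).
    Along such a segment f increases near xbar, which gives
    (a) 'd f xbar u >= 0 (first-order condition), used for T_C and T^2_C;
    (b) by the mean value theorem, points xbar + c u with c arbitrarily
        small at which 'd f (xbar + c u) u >= 0.
    Applied with u = -v, (b) combined with the Lipschitz bound on the
    gradient contradicts z v < 0 for any Frechet second-order subgradient z
    of f at xbar in direction v with 'd f xbar v = 0. *)

Section DualFacts.
Variables (R : realType) (X : normedModType R).

Lemma dual0 (g : X -> R) : is_dual g -> g 0 = 0.
Proof. by move=> [gl _]; have := gl 1 0 0; rewrite scale1r addr0 mul1r; lra. Qed.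

Lemma dualZ (g : X -> R) r x : is_dual g -> g (r *: x) = r * g x.
Proof. by move=> gd; have := gd.1 r x 0; rewrite !addr0 dual0 // addr0. Qed.

Lemma dualD (g : X -> R) x y : is_dual g -> g (x + y) = g x + g y.
Proof. by move=> gd; have := gd.1 1 x y; rewrite scale1r mul1r. Qed.

Lemma dualN (g : X -> R) x : is_dual g -> g (- x) = - g x.
Proof. by move=> gd; rewrite -scaleN1r dualZ // mulN1r. Qed.

Lemma dualB (g : X -> R) x y : is_dual g -> g (x - y) = g x - g y.
Proof. by move=> gd; rewrite dualD // dualN. Qed.

(** The dual norm is nonnegative for any function (it is a supremum of
    absolute values, or 0 when that supremum does not exist). *)
Lemma dnorm_ge0 (g : X -> R) : 0 <= dnorm g.
Proof.
rewrite /dnorm; set S := [set `|g x| | x in _].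
have [hs|hs] := pselect (has_sup S); last by rewrite sup_out.
by apply: le_trans (sup_upper_bound hs _); last by exists 0; rewrite //= normr0.
Qed.

End DualFacts.

Section Polyhedral.
Variables (R : realType) (X : normedModType R).

Lemma gen_polyhedral_at (C : set X) xbar : gen_polyhedral C -> C xbar ->
  exists p (xs : nat -> X -> R) (alpha : nat -> R) (M : set X),
  [/\ M 0, (forall (r : R) x y, M x -> M y -> M (r *: x + y)), closed M,
      (forall i, (i < p)%N -> is_dual (xs i)) &
      forall x, C x <-> (M (x - xbar) /\ forall i, (i < p)%N -> xs i x <= alpha i)].
Proof.
move=> [p [xs [alpha [L [[a [M [M0 Ml cM ->]]] dual ->]]]]] [[m0 Mm0 <-] _].
exists p, xs, alpha, M; split => // x; split.
- move=> [[m Mm <-] xle]; split => //.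
  have -> : a + m - (a + m0) = (-1) *: m0 + m.
    by rewrite scaleN1r opprD addrACA subrr add0r addrC.
  exact: Ml.
- move=> [Mx xle]; split => //; exists (1 *: m0 + (x - (a + m0))); first exact: Ml.
  by rewrite scale1r addrA addrC addrNK.
Qed.

Variables (C : set X) (xbar : X) (p : nat) (xs : nat -> X -> R) (alpha : nat -> R)
  (M : set X).
Hypotheses (M0 : M 0) (Ml : forall (r : R) x y, M x -> M y -> M (r *: x + y))
  (cM : closed M) (dual : forall i, (i < p)%N -> is_dual (xs i))
  (Cchar : forall x, C x <-> (M (x - xbar) /\ forall i, (i < p)%N -> xs i x <= alpha i))
  (Cxbar : C xbar).

Definition feasible_dir (u : X) : Prop :=
  M u /\ forall i, (i < p)%N -> xs i xbar = alpha i -> xs i u <= 0.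

Lemma feasibleD u w : feasible_dir u -> feasible_dir w -> feasible_dir (u + w).
Proof.
move=> [Mu uact] [Mw wact]; split; first by rewrite -[u]scale1r; exact: Ml.
move=> i ip act; rewrite (dualD _ _ (dual ip)).
by have := uact i ip act; have := wact i ip act; lra.
Qed.

Lemma feasibleZ r u : 0 <= r -> feasible_dir u -> feasible_dir (r *: u).
Proof.
move=> r0 [Mu uact]; split; first by rewrite -[_ *: u]addr0; exact: Ml.
by move=> i ip act; rewrite (dualZ _ _ (dual ip)) mulr_ge0_le0 // uact.
Qed.

Lemma feasible_of_mem x : C x -> feasible_dir (x - xbar).
Proof.
move=> /Cchar[Mx xle]; split => // i ip act.
by rewrite (dualB _ _ (dual ip)) act subr_le0 xle.
Qed.

Lemma feasible_lim (y : nat -> X) u :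
  (forall k, feasible_dir (y k)) -> y @ \oo --> u -> feasible_dir u.
Proof.
move=> yf yu; split.
  by apply: (closed_cvg _ cM _ _ yu); apply: nearW => k; have [] := yf k.
move=> i ip act; have [_ xcont] := dual ip.
apply: (closed_cvg _ (@closed_le _ 0) _ _ (cvg_comp _ _ yu (xcont u))).
by apply: nearW => k /=; have [_ ->] := yf k.
Qed.

Lemma tangent_cone_feasible v : tangent_cone C xbar v -> feasible_dir v.
Proof.
move=> [tau [xk [tau0 _ Cxk vlim]]]; apply: feasible_lim vlim => k.
by apply: feasibleZ; [rewrite invr_ge0 ltW | exact: feasible_of_mem].
Qed.

(** If -v is feasible, every second-order tangent vector at (xbar, v) is
    feasible: its difference quotients split as a nonnegative combination of
    x_k - xbar and -v. *)
Lemma tangent_set2_feasible v w :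
  feasible_dir (- v) -> tangent_set2 C xbar v w -> feasible_dir w.
Proof.
move=> fnv [tau [xk [tau0 _ Cxk wlim]]]; apply: feasible_lim wlim => k.
set r := ((tau k ^+ 2) / 2)^-1.
have r0 : 0 <= r by rewrite invr_ge0 divr_ge0 // sqr_ge0.
have -> : r *: (xk k - xbar - tau k *: v) = r *: (xk k - xbar) + (r * tau k) *: - v.
  by rewrite scalerDr scalerN scalerA scalerN.
apply: feasibleD; apply: feasibleZ => //; first exact: feasible_of_mem.
by rewrite mulr_ge0 // ltW.
Qed.

(** Polyhedrality: along a feasible direction, a short open segment from
    xbar stays in C (active constraints stay satisfied, inactive ones have
    slack). *)
Lemma feasible_segment u : feasible_dir u ->
  \forall t \near (0 : R)^'+, C (xbar + t *: u).
Proof.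
move=> [Mu uact].
have : \forall t \near (0 : R)^'+, forall i : 'I_p, xs i (xbar + t *: u) <= alpha i.
  apply: filter_forall => -[i ip] /=; have [_ xle] := (Cchar _).1 Cxbar.
  have [act|inact] := eqVneq (xs i xbar) (alpha i).
    near=> t; have t0 : 0 < t by near: t; exact: nbhs_right_gt.
    rewrite (dualD _ _ (dual ip)) (dualZ _ _ (dual ip)) -act gerDl.
    by rewrite mulr_ge0_le0 ?(ltW t0) ?uact // act.
  have gap : 0 < alpha i - xs i xbar.
    by rewrite subr_gt0 lt_neqAle inact xle.
  have norm1 : 0 < `|xs i u| + 1 by rewrite ltr_wpDl.
  have slack : 0 < (alpha i - xs i xbar) / (`|xs i u| + 1) by rewrite divr_gt0.
  near=> t; have t0 : 0 < t by near: t; exact: nbhs_right_gt.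
  have : t < (alpha i - xs i xbar) / (`|xs i u| + 1) by near: t; exact: nbhs_right_lt.
  rewrite ltr_pdivlMr // (dualD _ _ (dual ip)) (dualZ _ _ (dual ip)) => tlt.
  have : xs i u <= `|xs i u| := ler_norm _.
  nra.
apply: filterS => t tle; apply/Cchar; split.
  by rewrite addrAC subrr add0r -[_ *: u]addr0; exact: Ml.
by move=> i ip; exact: (tle (Ordinal ip)).
Unshelve. all: by end_near.
Qed.

End Polyhedral.

Section Optimality.
Variables (R : realType) (X : normedModType R) (f : X -> R) (C : set X) (xbar : X).
Hypothesis xbar_min : \forall x \near xbar, C x -> f xbar <= f x.

Lemma segment_local_min u : (\forall t \near (0 : R)^'+, C (xbar + t *: u)) ->
  \forall t \near (0 : R)^'+, f xbar <= f (xbar + t *: u).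
Proof.
move: xbar_min => /nbhs_ballP[e e0 emin] seg.
have norm1 : 0 < `|u| + 1 by rewrite ltr_wpDl.
near=> t; apply: emin; last by near: t.
have t0 : 0 < t by near: t; exact: nbhs_right_gt.
have : t < e / (`|u| + 1) by near: t; apply: nbhs_right_lt; rewrite divr_gt0.
rewrite -ball_normE /= opprD addrA subrr add0r normrN normrZ gtr0_norm //.
rewrite ltr_pdivlMr // => te; have := normr_ge0 u; nra.
Unshelve. all: by end_near.
Qed.

Lemma first_order_segment u : differentiable f xbar ->
  (\forall t \near (0 : R)^'+, C (xbar + t *: u)) -> 0 <= 'd f xbar u.
Proof.
move=> dfx /segment_local_min fmin; rewrite -deriveE //.
have := cvg_dnbhs_at_right (@diff_derivable _ _ _ _ _ u dfx).
move/cvgr_to_ge; apply.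
near=> h; have h0 : 0 < h by near: h; exact: nbhs_right_gt.
rewrite /= [h *: u + _]addrC; apply: mulr_ge0; first by rewrite invr_ge0 ltW.
by rewrite subr_ge0; near: h.
Unshelve. all: by end_near.
Qed.

Lemma derive_along_line u a t : differentiable f (t *: u + a) ->
  is_derive t (1 : R) (fun s => f (s *: u + a)) ('d f (t *: u + a) u).
Proof.
move=> dft.
have quotE : (fun h : R => h^-1 *: (((fun s => f (s *: u + a)) \o shift t) (h *: 1)
      - f (t *: u + a))) =
    (fun h => h^-1 *: ((f \o shift (t *: u + a)) (h *: u) - f (t *: u + a))).
  have sc (r b : R) : r *: b = r * b by [].
  by apply/funext => h /=; rewrite [_%:A]sc mulr1 scalerDl -addrA.
split; first by rewrite /derivable quotE; exact: diff_derivable.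
by rewrite /derive quotE -[lim _]/(derive f (t *: u + a) u); exact: deriveE.
Qed.

(** Mean value theorem along a segment direction u: arbitrarily close to
    xbar there are points xbar + c u where the slope of f in direction u is
    nonnegative. *)
Lemma descent_points u : (forall x, differentiable f x) ->
  (\forall t \near (0 : R)^'+, C (xbar + t *: u)) ->
  forall eps : R, 0 < eps ->
  exists2 c : R, 0 < c < eps & 0 <= 'd f (xbar + c *: u) u.
Proof.
move=> df /segment_local_min fmin eps eps0.
have [s [s0 seps fs]] : exists s, [/\ 0 < s, s < eps & f xbar <= f (xbar + s *: u)].
  apply: (@filter_ex _ (0 : R)^'+); near=> s; split; near: s.
  - exact: nbhs_right_gt.
  - exact: nbhs_right_lt.
  - exact: fmin.
have dphi x : is_derive x (1 : R) (fun s => f (s *: u + xbar)) ('d f (x *: u + xbar) u).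
  exact: derive_along_line.
have phi_derivable (x : R) : derivable (fun s : R => f (s *: u + xbar)) x 1.
  by case: (dphi x).
have [c cI] := MVT s0 (fun x _ => dphi x)
  (derivable_within_continuous (fun x _ => phi_derivable x)).
move: cI; rewrite in_itv /= => /andP[c0 cs].
rewrite scale0r add0r subr0 => incr.
exists c; first by rewrite c0 (lt_trans cs).
rewrite addrC -(pmulr_lge0 _ s0) -incr subr_ge0 addrC.
exact: fs.
Unshelve. all: by end_near.
Qed.

End Optimality.

Section SecondOrderSubdifferential.
Variables (R : realType) (X : normedModType R) (f : X -> R) (xbar : X).

(** If the gradient is Lipschitz at xbar, 'd f xbar v = 0, and there are
    points xbar - c v (c -> 0+) where f does not decrease in direction -v,
    then every Frechet second-order subgradient z in direction v satisfies
    z v >= 0: otherwise the Frechet normal inequality at xbar - c v forces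
    c |z v| <= e (c |v| + D) <= c |z v| / 2. *)
Lemma frechet_sod_nonneg (l : R) (U : set X) (v : X) (z : X -> R) :
  0 <= l -> nbhs xbar U ->
  (forall x, U x -> dnorm (fun h => 'd f x h - 'd f xbar h) <= l * `|x - xbar|) ->
  'd f xbar v = 0 ->
  (forall eps : R, 0 < eps ->
     exists2 c : R, 0 < c < eps & 0 <= 'd f (xbar + c *: - v) (- v)) ->
  frechet_sod f xbar v z -> 0 <= z v.
Proof.
move=> l0 /nbhs_ballP[r r0 Ulip] lip dv0 descent [zd zsod].
have [->|vn0] := eqVneq v 0; first by rewrite dual0.
have nv : 0 < `|v| by rewrite normr_gt0.
rewrite leNgt; apply/negP => zneg.
set K := `|v| * (1 + l).
have K0 : 0 < K by rewrite mulr_gt0 // ltr_pwDl.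
set e := - z v / (2 * K).
have e0 : 0 < e by rewrite divr_gt0 ?oppr_gt0 // mulr_gt0.
have eK : e * (2 * K) = - z v by rewrite /e divfK // gt_eqF // mulr_gt0.
have [d d0 zd_ineq] := zsod e e0.
have eps0 : 0 < Num.min (d / K) (r / `|v|) by rewrite lt_min !divr_gt0.
have [c /andP[c0]] := descent _ eps0.
rewrite lt_min ltr_pdivlMr // ltr_pdivlMr // => /andP[cd cr] dfy.
set y := xbar + c *: - v.
have ny : `|y - xbar| = c * `|v| by rewrite /y addrAC subrr add0r normrZ normrN gtr0_norm.
have := zd_ineq y; rewrite /= ny.
set D := dnorm (fun h => 'd f y h - 'd f xbar h) => ineq.
have D0 : 0 <= D := dnorm_ge0 _.
have Dle : D <= l * (c * `|v|).
  rewrite -ny; apply: lip; apply: Ulip.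
  by rewrite -ball_normE /= distrC ny.
have nd0 : 0 < c * `|v| + D by rewrite ltr_pwDl // mulr_gt0.
have ndK : c * `|v| + D <= c * K by rewrite /K; nra.
have := ineq nd0 (le_lt_trans ndK cd).
rewrite ler_pdivrMr // dv0 subr0 /y addrAC subrr add0r (dualZ _ _ zd) (dualN _ zd).
rewrite linearN /= in dfy => H.
have : e * (c * `|v| + D) <= e * (c * K) by rewrite ler_pM2l.
nra.
Qed.

End SecondOrderSubdifferential.

Unset Implicit Arguments. Set Strict Implicit.

Theorem theorem4p1 (R : realType) (X : completeNormedModType R)
  (C : set X) (f : X -> R) (xbar : X) (l : R) (U : set X) :
  C !=set0 -> gen_polyhedral C -> C1 f ->
  C xbar -> (\forall x \near xbar, C x -> f xbar <= f x) ->
  0 < l -> nbhs xbar U ->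
  (forall x, U x -> dnorm (fun h => 'd f x h - 'd f xbar h) <= l * `|x - xbar|) ->
  (forall v, tangent_cone C xbar v -> 0 <= 'd f xbar v) /\
  (forall v : X, tangent_cone C xbar v -> tangent_cone C xbar (- v) ->
     'd f xbar v = 0 ->
     (forall w, tangent_set2 C xbar v w -> 0 <= 'd f xbar w) /\
     (forall z, frechet_sod f xbar v z -> 0 <= z v)).
Proof.
move=> _ Cpoly [df _] Cxbar xbar_min l0 nbhsU lip.
have [p [xs [alpha [M [M0 Ml cM dual Cchar]]]]] := gen_polyhedral_at Cpoly Cxbar.
have tangent_feasible := tangent_cone_feasible M0 Ml cM dual Cchar.
have segment u (fu : feasible_dir xbar p xs alpha M u) :=
  feasible_segment M0 Ml dual Cchar Cxbar fu.
have first_order_feasible u : feasible_dir xbar p xs alpha M u -> 0 <= 'd f xbar u.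
  by move=> /segment; exact: first_order_segment xbar_min u (df xbar).
split; first by move=> v /tangent_feasible; exact: first_order_feasible.
move=> v _ /tangent_feasible feasible_nv dv0; split.
  move=> w /(tangent_set2_feasible M0 Ml cM dual Cchar feasible_nv).
  exact: first_order_feasible.
move=> z; apply: frechet_sod_nonneg (ltW l0) nbhsU lip dv0 _.
exact: descent_points xbar_min (- v) df (segment _ feasible_nv).
Qed.
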